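(* Let $P,Q\subseteq M_{\mathbb R}$ be lattice polytopes such that $P+Q$ is a reflexive polytope with respect to some lattice point. Let $p\in P$ be a lattice point, $L:=\mathrm{lin}(P-p)$, and $\pi:M_{\mathbb R}\to M_{\mathbb R}/L$ the projection. Then $\pi(P+Q)$ is a reflexive polytope with respect to the lattice $\pi(M)$ (with respect to some lattice point).
   Context: $M\cong\mathbb Z^d$, $N$ its dual lattice. A lattice polytope $\Delta$ is reflexive with respect to a lattice point $m$ if $m$ lies in the interior of $\Delta$ and $\{y:\langle x,y\rangle\ge-1\ \forall x\in\Delta-m\}$ is a lattice polytope. (If $\dim P=\dim(P+Q)$ the image is a point, regarded as a $0$-dimensional reflexive polytope.) *)

From HB Require Import structures.
From mathcomp Require Import all_boot all_order all_algebra.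
From mathcomp Require Import all_classical all_reals all_analysis.
Set Implicit Arguments. Unset Strict Implicit. Unset Printing Implicit Defensive.
Import Order.TTheory GRing.Theory Num.Theory.
Import numFieldNormedType.Exports.
Local Open Scope classical_set_scope.
Local Open Scope ring_scope.

(* M_R = R^d, realised as row vectors 'rV[R]_d; the dual N_R is identified
   with 'rV[R]_d through the standard pairing below. *)

Definition pairing (R : realType) (n : nat) (x y : 'rV[R]_n) : R :=
  (x *m y^T) 0 0.

Definition Zlattice (R : realType) (n : nat) : set 'rV[R]_n :=
  [set x | exists z : 'rV[int]_n, x = map_mx (fun k : int => k%:~R) z].

Definition dual_lattice (R : realType) (n : nat) (Lam : set 'rV[R]_n)
  : set 'rV[R]_n :=
  [set y | forall l, Lam l -> exists k : int, pairing l y = k%:~R].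

Definition conv_hull (R : realType) (n : nat) (s : seq 'rV[R]_n) : set 'rV[R]_n :=
  [set x | exists w : 'I_(size s) -> R,
     (forall i, 0 <= w i) /\ \sum_i w i = 1 /\
     x = \sum_i w i *: s`_i].

Definition lattice_polytope (R : realType) (n : nat) (Lam : set 'rV[R]_n)
  (D : set 'rV[R]_n) : Prop :=
  exists s : seq 'rV[R]_n, (forall v, v \in s -> Lam v) /\ D = conv_hull s.

Definition minkowski_sum (R : realType) (n : nat) (A B : set 'rV[R]_n) : set 'rV[R]_n :=
  [set z | exists x y, A x /\ B y /\ z = x + y].

Definition lin_span (R : realType) (n : nat) (S : set 'rV[R]_n) : set 'rV[R]_n :=
  [set x | exists (k : nat) (c : 'I_k -> R) (v : 'I_k -> 'rV[R]_n),
     (forall i, S (v i)) /\ x = \sum_i c i *: v i].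

Definition translate (R : realType) (n : nat) (S : set 'rV[R]_n) (p : 'rV[R]_n)
  : set 'rV[R]_n := [set x - p | x in S].

Definition polar_at (R : realType) (n : nat) (D : set 'rV[R]_n) (m : 'rV[R]_n)
  : set 'rV[R]_n :=
  [set y | forall x, D x -> -1 <= pairing (x - m) y].

Definition reflexive_wrt (R : realType) (n : nat) (Lam : set 'rV[R]_n)
  (D : set 'rV[R]_n) (m : 'rV[R]_n) : Prop :=
  [/\ lattice_polytope Lam D, Lam m, (interior D) m &
      lattice_polytope (dual_lattice Lam) (polar_at D m)].

Definition lin_image (R : realType) (d n : nat) (A : 'M[R]_(d, n))
  (S : set 'rV[R]_d) : set 'rV[R]_n := [set x *m A | x in S].

From HB Require Import structures.
From mathcomp Require Import all_boot all_order all_algebra.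
From mathcomp Require Import all_classical all_reals all_analysis.
From mathcomp Require Import ring lra.
Import Order.TTheory GRing.Theory Num.Theory.
Import numFieldNormedType.Exports.
Local Open Scope classical_set_scope.
Local Open Scope ring_scope.
Set Implicit Arguments. Unset Strict Implicit. Unset Printing Implicit Defensive.

(* Write D = P + Q = conv(SP) + conv(SQ), reflexive at m, and let A realise the
   projection, so that x |-> x A identifies M_R / L with R^n.  The image of D is
   a lattice polytope of the image lattice with m A in its interior, and its
   polar at m A is {v | v A^T in D°}, where D° is the polar of D at m.  Now D° is
   the bounded polyhedron cut out by the inequalities <s_P + s_Q - m, .> >= -1
   for vertices s_P of P and s_Q of Q, and the projected polar is cut out by the
   same inequalities read through A, so it is the convex hull of its vertices.
   The point is that a vertex v of the projected polar lifts to a vertex v A^T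
   of D°: all vertices of P have the same image under A, so an inequality that
   is active at v stays active when s_P is replaced by any other vertex of P.
   Hence any direction u respecting the active inequalities at v A^T is
   constant on the vertices of P, i.e. orthogonal to L, i.e. of the form e A^T
   with e respecting the active inequalities at v, and e = 0.  So the vertices
   of the projected polar are 0 and pullbacks of vertices of D°, which lie in
   the dual of the image lattice. *)

Section Pairing.
Variables (R : realType) (n : nat).
Implicit Types x y z : 'rV[R]_n.

Lemma pairingE x y : pairing x y = \sum_i x 0 i * y 0 i.
Proof. by rewrite /pairing mxE; apply: eq_bigr => i _; rewrite mxE. Qed.

Lemma pairingC x y : pairing x y = pairing y x.
Proof. by rewrite !pairingE; apply: eq_bigr => i _; rewrite mulrC. Qed.

Lemma pairingDl x y z : pairing (x + y) z = pairing x z + pairing y z.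
Proof. by rewrite !pairingE -big_split; apply: eq_bigr => i _; rewrite mxE mulrDl. Qed.

Lemma pairingZl (a : R) x z : pairing (a *: x) z = a * pairing x z.
Proof. by rewrite !pairingE mulr_sumr; apply: eq_bigr => i _; rewrite mxE mulrA. Qed.

Lemma pairingNl x z : pairing (- x) z = - pairing x z.
Proof. by rewrite -scaleN1r pairingZl mulN1r. Qed.

Lemma pairingBl x y z : pairing (x - y) z = pairing x z - pairing y z.
Proof. by rewrite pairingDl pairingNl. Qed.

Lemma pairing0l z : pairing 0 z = 0.
Proof. by rewrite -(scale0r 0) pairingZl mul0r. Qed.

Lemma pairingDr x y z : pairing z (x + y) = pairing z x + pairing z y.
Proof. by rewrite !(pairingC z) pairingDl. Qed.

Lemma pairingZr (a : R) x z : pairing z (a *: x) = a * pairing z x.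
Proof. by rewrite !(pairingC z) pairingZl. Qed.

Lemma pairingNr x z : pairing z (- x) = - pairing z x.
Proof. by rewrite !(pairingC z) pairingNl. Qed.

Lemma pairingBr x y z : pairing z (x - y) = pairing z x - pairing z y.
Proof. by rewrite !(pairingC z) pairingBl. Qed.

Lemma pairing0r z : pairing z 0 = 0.
Proof. by rewrite pairingC pairing0l. Qed.

Lemma pairing_suml (I : Type) (r : seq I) (P : pred I) (F : I -> 'rV[R]_n) z :
  pairing (\sum_(i <- r | P i) F i) z = \sum_(i <- r | P i) pairing (F i) z.
Proof.
elim/big_rec2: _ => [|i a b _ <-]; first exact: pairing0l.
by rewrite pairingDl.
Qed.

Lemma pairing_self_gt0 x : x != 0 -> 0 < pairing x x.
Proof.
move=> x0; have sq_ge0 i : 0 <= x 0 i * x 0 i by rewrite -expr2 sqr_ge0.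
rewrite pairingE lt_def sumr_ge0 // andbT psumr_neq0 //.
apply: contraNT x0 => /hasPn x_eq0; apply/eqP/rowP => i; rewrite mxE.
have := x_eq0 i (mem_index_enum _); rewrite /= lt_def sq_ge0 andbT negbK.
by rewrite mulf_eq0 orbb => /eqP.
Qed.

End Pairing.

Lemma pairing_mulmx (R : realType) d n (x : 'rV[R]_d) (A : 'M[R]_(d, n)) v :
  pairing (x *m A) v = pairing x (v *m A^T).
Proof. by rewrite /pairing trmx_mul trmxK mulmxA. Qed.

Section ConvHull.
Variables (R : realType) (n : nat).
Implicit Types s : seq 'rV[R]_n.

Lemma conv_hullP s x : conv_hull s x <->
  exists w : nat -> R, (forall i, 0 <= w i) /\ \sum_(i < size s) w i = 1 /\
     x = \sum_(i < size s) w i *: s`_i.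
Proof.
split=> [[w [w0 [w1 ->]]]|[w [w0 [w1 ->]]]]; last by exists (fun i => w i).
exists (fun i => if insub i is Some o then w o else 0); split.
  by move=> i; case: insub.
by split; [rewrite -w1|]; apply: eq_bigr => i _; rewrite valK.
Qed.

Lemma mem_conv_hull s v : v \in s -> conv_hull s v.
Proof.
move=> vs; pose i0 := Ordinal (etrans (index_mem v s) vs).
have other_eq0 (i : 'I_(size s)) : i != i0 -> (val i == index v s)%:R = 0 :> R.
  by move=> /eqP ne; case: eqP => // E; case: ne; exact: val_inj.
exists (fun i => (val i == index v s)%:R); split; first by move=> i; case: (_ == _).
split; rewrite (bigD1 i0) //= eqxx.
  by rewrite big1 ?addr0 // => i /other_eq0.
by rewrite scale1r nth_index // big1 ?addr0 // => i /other_eq0 ->; rewrite scale0r.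
Qed.

Lemma conv_hull_convex s x y (l : R) : conv_hull s x -> conv_hull s y ->
  0 <= l -> l <= 1 -> conv_hull s (l *: x + (1 - l) *: y).
Proof.
move=> /conv_hullP [wx [wx0 [wx1 ->]]] /conv_hullP [wy [wy0 [wy1 ->]]] l0 l1.
apply/conv_hullP; exists (fun i => l * wx i + (1 - l) * wy i); split.
  by move=> i; rewrite addr_ge0 // mulr_ge0 // subr_ge0.
split; first by rewrite big_split /= -!mulr_sumr wx1 wy1 !mulr1 addrC subrK.
rewrite !scaler_sumr -big_split /=; apply: eq_bigr => i _.
by rewrite [RHS]scalerDl !scalerA.
Qed.

Lemma conv_hull_pairing_ge s x u (a : R) : conv_hull s x ->
  (forall v, v \in s -> a <= pairing v u) -> a <= pairing x u.
Proof.
move=> [w [w0 [w1 ->]]] s_ge.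
rewrite pairing_suml -[a]mul1r -w1 mulr_suml; apply: ler_sum => i _.
by rewrite pairingZl ler_wpM2l // s_ge // mem_nth.
Qed.

Lemma conv_hull_pairing_eq s x u (a : R) : conv_hull s x ->
  (forall v, v \in s -> pairing v u = a) -> pairing x u = a.
Proof.
move=> hx s_eq; apply/eqP; rewrite eq_le -lerN2 -!pairingNr.
by rewrite !(conv_hull_pairing_ge hx) // => v /s_eq; rewrite ?pairingNr => ->.
Qed.

Lemma conv_hull_pairing_min s x u : conv_hull s x ->
  exists2 v, v \in s & pairing v u <= pairing x u.
Proof.
move=> hx; have [w [_ [w1 _]]] := hx.
have s_gt0 : (0 < size s)%N.
  by case: s hx w w1 => //= _ w; rewrite big_ord0 => /eqP; rewrite eq_sym oner_eq0.
have [i0 _ i0_min] := @arg_minP _ R _ (Ordinal s_gt0) xpredT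
  (fun i : 'I_(size s) => pairing s`_i u) isT.
exists s`_i0; first exact: mem_nth.
apply: conv_hull_pairing_ge hx _ => v vs.
by have := i0_min (Ordinal (etrans (index_mem v s) vs)) isT; rewrite /= nth_index.
Qed.

End ConvHull.

Section Polyhedron.
Variables (R : realType) (n : nat) (I : finType) (c : I -> 'rV[R]_n).

Definition polyhedron : set 'rV[R]_n := [set v | forall k, -1 <= pairing (c k) v].

Definition polyhedron_vertex (v : 'rV[R]_n) : Prop := polyhedron v /\
  forall e, (forall k, pairing (c k) v = -1 -> pairing (c k) e = 0) -> e = 0.

Let inactive (v : 'rV[R]_n) : {set I} := [set k | pairing (c k) v != -1].

Lemma conv_hull_sub_polyhedron s :
  (forall u, u \in s -> polyhedron u) -> conv_hull s `<=` polyhedron.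
Proof.
move=> s_sub x hx k; rewrite pairingC; apply: conv_hull_pairing_ge hx _ => u us.
by rewrite pairingC; exact: s_sub.
Qed.

(* t is the first time at which an inactive inequality becomes tight along f. *)
Lemma polyhedron_push v f : polyhedron v ->
  (forall k, pairing (c k) v = -1 -> pairing (c k) f = 0) ->
  (exists k, pairing (c k) f < 0) ->
  exists2 t, 0 < t &
    polyhedron (v + t *: f) /\ inactive (v + t *: f) \proper inactive v.
Proof.
move=> fv act [k1 fk1].
pose tk k := (pairing (c k) v + 1) / (- pairing (c k) f).
have [k0 fk0 k0_min] := @arg_minP _ R I k1 (fun k => pairing (c k) f < 0) tk fk1.
have inactive_lt k : pairing (c k) f < 0 -> -1 < pairing (c k) v.
  move=> fk; rewrite lt_def fv andbT; apply/eqP => E.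
  by move: fk; rewrite (act k E) ltxx.
have tk_gt0 k : pairing (c k) f < 0 -> 0 < tk k.
  by move=> fk; rewrite divr_gt0 ?oppr_gt0 // -(opprK 1) subr_gt0 inactive_lt.
have t_gt0 := tk_gt0 k0 fk0.
have moveE k : pairing (c k) (v + tk k0 *: f) =
    pairing (c k) v + tk k0 * pairing (c k) f.
  by rewrite pairingDr pairingZr.
have k0_tight : pairing (c k0) (v + tk k0 *: f) = -1.
  by rewrite moveE /tk; field; rewrite ltr0_neq0.
exists (tk k0) => //; split.
  move=> k; rewrite moveE; have [fk|fk] := ltP (pairing (c k) f) 0.
    have := k0_min k fk; rewrite {2}/tk ler_pdivlMr ?oppr_gt0 // mulrN; lra.
  have := fv k; have := mulr_ge0 (ltW t_gt0) fk; lra.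
apply/properP; split.
  apply/fintype.subsetP => k; rewrite !inE; apply: contra => /eqP E.
  by rewrite moveE E (act k E) mulr0 addr0.
by exists k0; rewrite !inE ?k0_tight ?eqxx // gt_eqF // inactive_lt.
Qed.

(* Induction on the number of inactive inequalities: a non-vertex v lies
   strictly between the two points reached by pushing it along +e and -e. *)
Lemma polyhedron_vertex_ind (Pr : 'rV[R]_n -> Prop) :
  (forall e, e != 0 -> exists k, pairing (c k) e < 0) ->
  (forall x y (l : R), Pr x -> Pr y -> 0 <= l -> l <= 1 ->
     Pr (l *: x + (1 - l) *: y)) ->
  (forall v, polyhedron_vertex v -> Pr v) ->
  forall v, polyhedron v -> Pr v.
Proof.
move=> bounded convex vertexPr v.
move: {2}#|inactive v| (erefl #|inactive v|) => N; elim/ltn_ind: N v.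
move=> N IH v card_v fv.
have [vert|/existsNP [e /not_implyP [act /eqP e0]]] := pselect
  (forall e, (forall k, pairing (c k) v = -1 -> pairing (c k) e = 0) -> e = 0).
  exact: vertexPr.
have actN k : pairing (c k) v = -1 -> pairing (c k) (- e) = 0.
  by move=> /act; rewrite pairingNr => ->; rewrite oppr0.
have [t1 t1_gt0 [f1 lt1]] := polyhedron_push fv act (bounded e e0).
have eN0 : - e != 0 by rewrite oppr_eq0.
have [t2 t2_gt0 [f2 lt2]] := polyhedron_push fv actN (bounded (- e) eN0).
have Pr1 := IH _ (leq_trans (proper_card lt1) (eq_leq card_v)) _ erefl f1.
have Pr2 := IH _ (leq_trans (proper_card lt2) (eq_leq card_v)) _ erefl f2.
have t_gt0 : 0 < t1 + t2 by rewrite addr_gt0.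
have := convex _ _ (t2 / (t1 + t2)) Pr1 Pr2.
have -> : t2 / (t1 + t2) *: (v + t1 *: e) +
    (1 - t2 / (t1 + t2)) *: (v + t2 *: - e) = v.
  by apply/rowP => i; rewrite !mxE; field; rewrite lt0r_neq0.
apply; first by rewrite divr_ge0 // ltW.
by rewrite ler_pdivrMr // mul1r lerDr ltW.
Qed.

Lemma polyhedron_vertex_mem s v : (forall u, u \in s -> polyhedron u) ->
  conv_hull s v -> polyhedron_vertex v -> v \in s.
Proof.
move=> s_sub [w [w0 [w1 vE]]] [_ vert].
have /hasP [i _ wi_gt0] : has (fun i => true && (0 < w i)) (index_enum _).
  by rewrite -psumr_neq0 // w1 oner_neq0.
have tight k : pairing (c k) v = -1 -> pairing (c k) s`_i = -1.
  move=> act; have : \sum_j w j * (pairing (c k) s`_j + 1) == 0.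
    rewrite (eq_bigr (fun j => pairing (w j *: s`_j) (c k) + w j)).
      by rewrite big_split /= -pairing_suml -vE w1 pairingC act addNr.
    by move=> j _; rewrite pairingZl pairingC mulrDr mulr1.
  rewrite psumr_eq0 => [/allP /(_ i (mem_index_enum _))|j _].
    by rewrite mulf_eq0 gt_eqF //= addr_eq0 => /eqP.
  rewrite mulr_ge0 // -[0](addNr 1) lerD2r.
  exact: s_sub (mem_nth 0 (ltn_ord j)) k.
have -> : v = s`_i.
  by apply/eqP; rewrite eq_sym -subr_eq0; apply/eqP/vert => k act;
     rewrite pairingBr tight // act subrr.
exact: mem_nth.
Qed.

End Polyhedron.

Section LinImage.
Variables (R : realType) (d n : nat) (A : 'M[R]_(d, n)).

Lemma lin_image_conv_hull s :
  lin_image A (conv_hull s) = conv_hull (map (mulmx^~ A) s).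
Proof.
have nthA i : (i < size s)%N -> (map (mulmx^~ A) s)`_i = s`_i *m A.
  by move=> ?; rewrite (nth_map 0).
apply/seteqP; split=> [_ [x /conv_hullP [w [w0 [w1 ->]]] <-]|].
  apply/conv_hullP; exists w; rewrite size_map; do 2!split=> //.
  by rewrite mulmx_suml; apply: eq_bigr => i _; rewrite nthA // scalemxAl.
move=> _ /conv_hullP [w [w0 [w1 ->]]]; rewrite size_map in w1 *.
exists (\sum_(i < size s) w i *: s`_i); first by apply/conv_hullP; exists w.
by rewrite mulmx_suml; apply: eq_bigr => i _; rewrite nthA // scalemxAl.
Qed.

Lemma lattice_polytope_lin_image (Lam D : set 'rV[R]_d) :
  lattice_polytope Lam D -> lattice_polytope (lin_image A Lam) (lin_image A D).
Proof.
move=> [s [s_Lam ->]]; exists (map (mulmx^~ A) s); split.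
  by move=> _ /mapP [x xs ->]; exists x => //; exact: s_Lam.
exact: lin_image_conv_hull.
Qed.

Lemma polar_at_lin_image (D : set 'rV[R]_d) m :
  polar_at (lin_image A D) (m *m A) = [set v | polar_at D m (v *m A^T)].
Proof.
apply/seteqP; split=> v /= pol x.
  by move=> Dx; rewrite -pairing_mulmx mulmxBl; apply: pol; exists x.
by move=> [y Dy <-]; rewrite -mulmxBl pairing_mulmx; exact: pol.
Qed.

Lemma dual_lattice_lin_image (Lam : set 'rV[R]_d) v :
  dual_lattice Lam (v *m A^T) -> dual_lattice (lin_image A Lam) v.
Proof. by move=> dv _ [x Lx <-]; rewrite pairing_mulmx; exact: dv. Qed.

Lemma surj_row_full : (forall y : 'rV[R]_n, exists x, y = x *m A) -> row_full A.
Proof.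
move=> surj; rewrite -sub1mx; apply/row_subP => i.
by have [x ->] := surj (row i 1%:M); exact: submxMl.
Qed.

Lemma ker_orthogonal_submx (u : 'rV[R]_d) :
  (forall x, x *m A = 0 -> pairing x u = 0) -> (u <= A^T)%MS.
Proof.
move=> ker_u; rewrite submxE; apply/eqP/rowP => j; rewrite !mxE.
set C := cokermx A^T.
have CA : C^T *m A = 0.
  by rewrite -[A in _ *m A]trmxK -trmx_mul mulmx_coker trmx0.
have := ker_u (row j C^T); rewrite -row_mul CA row0 pairingE => /(_ erefl) E.
by rewrite -[RHS]E; apply: eq_bigr => k _; rewrite !mxE mulrC.
Qed.

End LinImage.

Section Interior.
Variable R : realType.

Lemma mx_norm_entry_le a b (x : 'M[R]_(a, b)) i j : `|x i j| <= `|x|.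
Proof.
rewrite (_ : `|x| = mx_norm x) // mx_normrE.
exact: (le_bigmax _ (fun ij : 'I_a * 'I_b => `|x ij.1 ij.2|) (i, j)).
Qed.

Lemma mx_norm_le a b (x : 'M[R]_(a, b)) (k : R) :
  0 <= k -> (forall i j, `|x i j| <= k) -> `|x| <= k.
Proof.
move=> k0 x_le; rewrite (_ : `|x| = mx_norm x) // mx_normrE.
by apply: bigmax_le => // ij _; exact: x_le.
Qed.

Lemma mx_norm_mulmx_le p n (B : 'M[R]_(p, n)) (z : 'rV[R]_p) :
  `|z *m B| <= (\sum_k \sum_j `|B k j|) * `|z|.
Proof.
apply: mx_norm_le => [|i j].
  by rewrite mulr_ge0 // sumr_ge0 // => k _; rewrite sumr_ge0.
rewrite mxE (le_trans (ler_norm_sum _ _ _)) // mulr_suml; apply: ler_sum => k _.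
rewrite normrM (@le_trans _ _ (`|B k j| * `|z|)) //.
  by rewrite mulrC ler_wpM2l // mx_norm_entry_le.
by rewrite ler_wpM2r // (bigD1 j) //= lerDl sumr_ge0.
Qed.

(* A right inverse B of A turns a small displacement of y from m A into the
   small displacement (y - m A) B of m, whose image under A is y. *)
Lemma interior_lin_image d n (A : 'M[R]_(d, n)) (D : set 'rV[R]_d) m :
  row_full A -> interior D m -> interior (lin_image A D) (m *m A).
Proof.
move=> fullA intD; have [e e_gt0 ballD] := iffLR (@nbhs_normP R _ m D) intD.
apply: (iffRL (@nbhs_normP R _ (m *m A) _)).
set B := pinvmx A; set K := \sum_k \sum_j `|B k j|.
have K_ge0 : 0 <= K by rewrite sumr_ge0 // => k _; rewrite sumr_ge0.
exists (e / (K + 1)); first by rewrite /= divr_gt0 // ltr_wpDl.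
move=> y; rewrite /ball_ /= ltr_pdivlMr ?ltr_wpDl // => near_y.
exists (m - (m *m A - y) *m B); last first.
  by rewrite mulmxBl -mulmxA mulVpmx // mulmx1 opprB addrC subrK.
apply: ballD; rewrite /ball_ /= opprB addrC subrK.
apply: le_lt_trans (mx_norm_mulmx_le B _) _; apply: le_lt_trans near_y.
by rewrite mulrC ler_wpM2l // lerDl.
Qed.

Lemma interior_pairing_lt n (D : set 'rV[R]_n) m u :
  interior D m -> u != 0 -> exists2 x, D x & pairing (x - m) u < 0.
Proof.
move=> intD u0; have [e e_gt0 ballD] := iffLR (@nbhs_normP R _ m D) intD.
set eps := e / (`|u| + 1).
have eps_gt0 : 0 < eps by rewrite divr_gt0 // ltr_wpDl.
exists (m - eps *: u).
  apply: ballD; rewrite /ball_ /= opprB addrC subrK normrZ gtr0_norm //.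
  by rewrite /eps mulrAC ltr_pdivrMr ?ltr_wpDl // ltr_pM2l // ltrDl.
rewrite addrAC subrr add0r pairingNl pairingZl oppr_lt0 mulr_gt0 //.
exact: pairing_self_gt0.
Qed.

End Interior.

Section Projection.
Variables (R : realType) (d n : nat) (SP SQ : seq 'rV[R]_d) (m : 'rV[R]_d).
Variable A : 'M[R]_(d, n).
Let P := conv_hull SP.
Let D := minkowski_sum P (conv_hull SQ).

Definition shifted_vertex_sum (ij : 'I_(size SP) * 'I_(size SQ)) : 'rV[R]_d :=
  SP`_ij.1 + SQ`_ij.2 - m.

Let svs := shifted_vertex_sum.

Lemma mem_seq_nth (s : seq 'rV[R]_d) v : v \in s -> exists i : 'I_(size s), s`_i = v.
Proof. by move=> vs; exists (Ordinal (etrans (index_mem v s) vs)); rewrite nth_index. Qed.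

Lemma minkowski_pairing_min x u : D x -> exists ij, pairing (svs ij) u <= pairing (x - m) u.
Proof.
move=> [a [b [Pa [Qb ->]]]].
have [_ /mem_seq_nth [i <-] aP] := conv_hull_pairing_min u Pa.
have [_ /mem_seq_nth [j <-] bQ] := conv_hull_pairing_min u Qb.
by exists (i, j); rewrite /svs /shifted_vertex_sum !pairingBl !pairingDl lerB // lerD.
Qed.

Lemma shifted_vertex_sum_mem ij : D (svs ij + m).
Proof.
exists SP`_ij.1, SQ`_ij.2; rewrite /svs /shifted_vertex_sum subrK.
by split; [|split] => //; apply/mem_conv_hull/mem_nth.
Qed.

Lemma polar_at_minkowski : polar_at D m = polyhedron svs.
Proof.
apply/seteqP; split=> u pol.
  by move=> ij; have := pol _ (shifted_vertex_sum_mem ij); rewrite addrK.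
move=> x Dx; have [ij le_ij] := minkowski_pairing_min u Dx.
exact: le_trans (pol ij) le_ij.
Qed.

Lemma polar_lin_image_polyhedron :
  polar_at (lin_image A D) (m *m A) = polyhedron (fun ij => svs ij *m A).
Proof.
rewrite polar_at_lin_image polar_at_minkowski.
by apply/seteqP; split=> v /= pol ij; rewrite ?pairing_mulmx // -pairing_mulmx.
Qed.

Variable p : 'rV[R]_d.
Hypothesis Pp : P p.
Hypothesis kerA : forall x, x *m A = 0 <-> lin_span (translate P p) x.

Lemma vertex_mulmx (i : 'I_(size SP)) : SP`_i *m A = p *m A.
Proof.
apply/eqP; rewrite -subr_eq0 -mulmxBl; apply/eqP/kerA.
exists 1%N, (fun _ => 1), (fun _ => SP`_i - p); rewrite big_ord1 scale1r.
by split=> // _; exists SP`_i => //; apply/mem_conv_hull/mem_nth.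
Qed.

Lemma const_on_vertices_submx (u : 'rV[R]_d) (i0 : 'I_(size SP)) :
  (forall i : 'I_(size SP), pairing SP`_i u = pairing SP`_i0 u) -> (u <= A^T)%MS.
Proof.
move=> u_const; apply: ker_orthogonal_submx => _ /kerA [k [a [v [v_sub ->]]]].
have P_const z : P z -> pairing z u = pairing SP`_i0 u.
  by move=> Pz; apply: conv_hull_pairing_eq Pz _ => _ /mem_seq_nth [j <-].
rewrite pairing_suml big1 // => i _; have [y Py <-] := v_sub i.
by rewrite pairingZl pairingBl (P_const _ Py) (P_const _ Pp) subrr mulr0.
Qed.

Lemma polyhedron_vertex_lift v :
  polyhedron_vertex (fun ij => svs ij *m A) v ->
  (exists ij, pairing (svs ij *m A) v = -1) ->
  polyhedron_vertex svs (v *m A^T).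
Proof.
move=> [fv vert] [ij0 act0]; rewrite /polyhedron /= in fv.
split=> [ij|u u_act]; first by rewrite -pairing_mulmx.
have act i : pairing (svs (i, ij0.2)) (v *m A^T) = -1.
  rewrite -act0 !pairing_mulmx /svs /shifted_vertex_sum !pairingBl !pairingDl.
  by rewrite -!pairing_mulmx !vertex_mulmx.
have u_const (i : 'I_(size SP)) : pairing SP`_i u = pairing SP`_(ij0.1) u.
  have := u_act _ (act i); have := u_act _ (act ij0.1).
  rewrite /svs /shifted_vertex_sum /= !pairingBl !pairingDl; lra.
have uE : u = (u *m pinvmx A^T) *m A^T.
  by rewrite mulmxKpV // (const_on_vertices_submx u_const).
rewrite uE (vert (u *m pinvmx A^T)) ?mul0mx // => ij.
by rewrite !pairing_mulmx -uE; exact: u_act.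
Qed.

Hypothesis surjA : forall y : 'rV[R]_n, exists x, y = x *m A.

Lemma polar_lin_image_conv_hull U : interior D m -> polar_at D m = conv_hull U ->
  polar_at (lin_image A D) (m *m A) =
  conv_hull (0 :: [seq u *m pinvmx A^T | u <- U & (u <= A^T)%MS]).
Proof.
move=> intD polD; set V := 0 :: _.
have freeAT : row_free A^T by rewrite /row_free mxrank_tr; exact: surj_row_full.
have V_sub v : v \in V -> polyhedron (fun ij => svs ij *m A) v.
  rewrite inE => /orP [/eqP -> ij|/mapP [u]]; first by rewrite pairing0r lerN10.
  rewrite mem_filter => /andP [uA uU] -> ij; rewrite pairing_mulmx mulmxKpV //.
  suff : polyhedron svs u by apply.
  by rewrite -polar_at_minkowski polD; exact: mem_conv_hull.
rewrite polar_lin_image_polyhedron; apply/seteqP; split; last first.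
  exact: conv_hull_sub_polyhedron.
apply: polyhedron_vertex_ind => [e e0||v vert].
- have eA0 : e *m A^T != 0.
    by apply: contra e0 => /eqP eA; apply/eqP/(row_free_inj freeAT); rewrite eA mul0mx.
  have [x Dx lt_x] := interior_pairing_lt intD eA0.
  have [ij le_ij] := minkowski_pairing_min (e *m A^T) Dx.
  by exists ij; rewrite pairing_mulmx (le_lt_trans le_ij).
- by move=> x y l; exact: conv_hull_convex.
have [act|no_act] := pselect (exists ij, pairing (svs ij *m A) v = -1); last first.
  suff -> : v = 0 by apply/mem_conv_hull/mem_head.
  by apply: vert.2 => ij act; case: no_act; exists ij.
have w_vert := polyhedron_vertex_lift vert act.
have wU : v *m A^T \in U.
  apply: (polyhedron_vertex_mem _ _ w_vert) => [u uU|].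
    by rewrite -polar_at_minkowski polD; exact: mem_conv_hull.
  by rewrite -polD polar_at_minkowski; exact: w_vert.1.
apply/mem_conv_hull; rewrite inE; apply/orP; right; apply/mapP.
exists (v *m A^T); first by rewrite mem_filter submxMl wU.
by apply: (row_free_inj freeAT); rewrite mulmxKpV // submxMl.
Qed.

Lemma reflexive_lin_image (Lam : set 'rV[R]_d) :
  reflexive_wrt Lam D m -> reflexive_wrt (lin_image A Lam) (lin_image A D) (m *m A).
Proof.
move=> [polyD Lm intD [U [U_dual polD]]]; split.
- exact: lattice_polytope_lin_image.
- by exists m.
- by apply: interior_lin_image intD; exact: surj_row_full.
exists (0 :: [seq u *m pinvmx A^T | u <- U & (u <= A^T)%MS]).
split; last exact: polar_lin_image_conv_hull.
move=> v; rewrite inE => /orP [/eqP -> l _|/mapP [u]].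
  by exists 0; rewrite pairing0r.
rewrite mem_filter => /andP [uA uU] ->.
by apply: dual_lattice_lin_image; rewrite mulmxKpV //; exact: U_dual.
Qed.

End Projection.

Theorem corollary6p6 (R : realType) (d : nat) (P Q : set 'rV[R]_d) :
  lattice_polytope (@Zlattice R d) P ->
  lattice_polytope (@Zlattice R d) Q ->
  (exists m, reflexive_wrt (@Zlattice R d) (minkowski_sum P Q) m) ->
  forall p : 'rV[R]_d, Zlattice p -> P p ->
  forall (n : nat) (A : 'M[R]_(d, n)),
    (forall x : 'rV[R]_d, x *m A = 0 <-> lin_span (translate P p) x) ->
    (forall y : 'rV[R]_n, exists x : 'rV[R]_d, y = x *m A) ->
  exists m' : 'rV[R]_n,
    reflexive_wrt (lin_image A (@Zlattice R d)) (lin_image A (minkowski_sum P Q)) m'.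
Proof.
move=> [SP [_ ->]] [SQ [_ ->]] [m reflD] p _ Pp n A kerA surjA.
by exists (m *m A); exact: reflexive_lin_image kerA surjA _ reflD.
Qed.
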